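(* Let $h(z)=\sum_{k\ge1}h_kz^k$ be a power series with non-negative coefficients, not identically zero. Let $\mathbf{w}=(\omega_k)_{k\ge0}$ be the coefficients of $\phi(z)=1/(1-h(z))$ (as a formal power series), and let $p(z)=zh(z)=\sum_{k\ge2}p_kz^k$. Then $\mathbf{w}$ has type I, II or III (in the sense of weight sequences) if and only if $(p_k)_{k}$ has type I, II or III respectively (in the sense for $(p_k)$), and moreover $\tau=t_0$.
   Context: Types of a weight sequence $\mathbf{w}$ (with $\omega_0>0$ and $\omega_k>0$ for some $k\ge2$, which holds here): let $\rho_\phi$ be the radius of convergence of $\phi(z)=\sum_k\omega_kz^k$; if $\rho_\phi>0$ put $\psi(t)=t\phi'(t)/\phi(t)$ on $[0,\rho_\phi)$ and $\nu=\lim_{t\uparrow\rho_\phi}\psi(t)\in(0,\infty]$; if $\rho_\phi=0$ put $\nu=0$. If $\nu\ge1$, $\tau\in(0,\rho_\phi]$ is the unique number with $\psi(\tau)=1$, otherwise $\tau=\rho_\phi$. Type I: $\nu\ge1$; type II: $0<\nu<1$; type III: $\nu=0$. Types of $(p_k)$: let $\rho_p$ be the radius of convergence of $p(z)$, $\mu_t=p'(t)$ for $t\in[0,\rho_p)$ and $\mu_{\rho_p}=\lim_{t\uparrow\rho_p}\mu_t$. Type I: $\rho_p>0$ and $\mu_{\rho_p}\ge1$, with $t_0$ the unique $t$ satisfying $\mu_t=1$; type II: $\rho_p>0$ and $0<\mu_{\rho_p}<1$, with $t_0=\rho_p$; type III: $\rho_p=0$, with $t_0=0$. *)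

From Stdlib Require Import Reals Lra ClassicalEpsilon.
Open Scope R_scope.

Inductive ER : Type := Fin (x : R) | Inf.

Definition ER_le (a b : ER) : Prop :=
  match a, b with
  | Fin x, Fin y => x <= y
  | _, Inf => True
  | Inf, Fin _ => False
  end.

Definition ER_lt (a b : ER) : Prop :=
  match a, b with
  | Fin x, Fin y => x < y
  | Fin _, Inf => True
  | Inf, _ => False
  end.

Definition ps_bounded (a : nat -> R) (r : R) : Prop :=
  exists M, forall k, Rabs (a k) * r ^ k <= M.

Definition is_radius (a : nat -> R) (rho : ER) : Prop :=
  (forall r, 0 <= r -> ps_bounded a r -> ER_le (Fin r) rho) /\
  (forall b : ER, (forall r, 0 <= r -> ps_bounded a r -> ER_le (Fin r) b) ->
      ER_le rho b).

(** Sum of a real series (0 if divergent). *)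
Definition series_sum (u : nat -> R) : R :=
  match excluded_middle_informative
          (exists l, Un_cv (fun n => sum_f_R0 u n) l) with
  | left H => proj1_sig (constructive_indefinite_description _ H)
  | right _ => 0
  end.

Definition ps_eval (a : nat -> R) (t : R) : R :=
  series_sum (fun k => a k * t ^ k).

(** Derivative of f at x (0 if f is not differentiable at x). *)
Definition deriv (f : R -> R) (x : R) : R :=
  match excluded_middle_informative (exists l, derivable_pt_lim f x l) with
  | left H => proj1_sig (constructive_indefinite_description _ H)
  | right _ => 0
  end.

Definition near_left (rho : ER) (P : R -> Prop) : Prop :=
  match rho with
  | Fin r => exists d, 0 < d /\ forall t, 0 <= t -> r - d < t -> t < r -> P t
  | Inf => exists M, forall t, M < t -> P t
  end.

Definition tends_left (f : R -> R) (rho : ER) (L : ER) : Prop :=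
  match L with
  | Fin l => forall eps, 0 < eps -> near_left rho (fun t => Rabs (f t - l) < eps)
  | Inf => forall M, near_left rho (fun t => M < f t)
  end.

Inductive seqtype : Type := TypeI | TypeII | TypeIII.

Definition psi (w : nat -> R) (t : R) : R :=
  t * deriv (ps_eval w) t / ps_eval w t.

Definition weight_type (w : nat -> R) (T : seqtype) : Prop :=
  match T with
  | TypeI => exists rho nu, is_radius w rho /\ ER_lt (Fin 0) rho /\
               tends_left (psi w) rho nu /\ ER_le (Fin 1) nu
  | TypeII => exists rho nu, is_radius w rho /\ ER_lt (Fin 0) rho /\
               tends_left (psi w) rho nu /\ ER_lt (Fin 0) nu /\ ER_lt nu (Fin 1)
  | TypeIII => is_radius w (Fin 0)
  end.

(** tau for the weight sequence w (psi extended at rho by its limit nu). *)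
Definition tau_spec (w : nat -> R) (tau : ER) : Prop :=
  exists rho, is_radius w rho /\
   ((rho = Fin 0 /\ tau = Fin 0) \/
    (ER_lt (Fin 0) rho /\ exists nu, tends_left (psi w) rho nu /\
      ((ER_le (Fin 1) nu /\ ER_lt (Fin 0) tau /\
          ((exists t, tau = Fin t /\ ER_lt (Fin t) rho /\ psi w t = 1) \/
           (tau = rho /\ nu = Fin 1))) \/
       (ER_lt nu (Fin 1) /\ tau = rho)))).

Definition mu (p : nat -> R) (t : R) : R := deriv (ps_eval p) t.

Definition offspring_type (p : nat -> R) (T : seqtype) : Prop :=
  match T with
  | TypeI => exists rho m, is_radius p rho /\ ER_lt (Fin 0) rho /\
               tends_left (mu p) rho m /\ ER_le (Fin 1) m
  | TypeII => exists rho m, is_radius p rho /\ ER_lt (Fin 0) rho /\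
               tends_left (mu p) rho m /\ ER_lt (Fin 0) m /\ ER_lt m (Fin 1)
  | TypeIII => is_radius p (Fin 0)
  end.

(** t_0 for (p_k) (mu extended at rho_p by its limit). *)
Definition t0_spec (p : nat -> R) (t0 : ER) : Prop :=
  exists rho, is_radius p rho /\
   ((rho = Fin 0 /\ t0 = Fin 0) \/
    (ER_lt (Fin 0) rho /\ exists m, tends_left (mu p) rho m /\
      ((ER_le (Fin 1) m /\
          ((exists t, t0 = Fin t /\ 0 <= t /\ ER_lt (Fin t) rho /\ mu p t = 1) \/
           (t0 = rho /\ m = Fin 1))) \/
       (ER_lt (Fin 0) m /\ ER_lt m (Fin 1) /\ t0 = rho)))).

Definition kdelta (k : nat) : R := match k with O => 1 | S _ => 0 end.

(** w is the coefficient sequence of 1/(1 - h) as a formal power series: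
    (1 - h) * (sum_k w_k z^k) = 1 coefficientwise. *)
Definition is_inv_one_minus (h w : nat -> R) : Prop :=
  forall n, sum_f_R0 (fun k => (kdelta k - h k) * w (n - k)%nat) n = kdelta n.

(** coefficients of p(z) = z h(z). *)
Definition shift_coef (h : nat -> R) (k : nat) : R :=
  match k with O => 0 | S j => h j end.

(* With [H(t) = sum h_k t^k], the generating function of [w] is [1 / (1 - H)] and
   [p(t) = t H(t)], so on [0, rho_w), where [H < 1],
     [psi(t) = t H'(t) / (1 - H(t))],  [mu_t = p'(t) = H(t) + t H'(t)],
     [psi(t) - 1 = (mu_t - 1) / (1 - H(t))].
   Both [psi] and [mu] are nondecreasing, so their limits [nu] and [m] at the radii exist,
   and [mu] increases strictly from [mu_0 = 0].  If [mu_z = 1] for some [z < rho_w], then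
   [psi > 1] and [mu > 1] beyond [z], so both sequences have type I and [tau = t_0 = z].
   Otherwise [rho_w = rho_p] (if [rho_w < rho_p] then [H(rho_w) >= 1], so [mu] exceeds [1]
   at [rho_w]) and [psi, mu < 1]; as [1 - H >= mu - H = t H'(t)] stays away from [0],
   [nu = 1] exactly when [m = 1], and [tau = t_0 = rho_w].  If [rho_p = 0] then [rho_w = 0]
   and both sequences have type III. *)

From Stdlib Require Import Reals Lra Lia Classical ClassicalEpsilon.
From Coquelicot Require Import Coquelicot.
Open Scope R_scope.

Lemma series_sum_correct (u : nat -> R) l : is_series u l -> series_sum u = l.
Proof.
  intros Hu. apply is_series_Reals in Hu.
  unfold series_sum. destruct excluded_middle_informative as [Hex|Hnex].
  - destruct constructive_indefinite_description as [l' Hl']; simpl.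
    eapply UL_sequence; eauto.
  - exfalso; apply Hnex; exists l; exact Hu.
Qed.

Lemma deriv_correct f x l : derivable_pt_lim f x l -> deriv f x = l.
Proof.
  intros Hf. unfold deriv. destruct excluded_middle_informative as [Hex|Hnex].
  - destruct constructive_indefinite_description as [l' Hl']; simpl.
    eapply uniqueness_limite; eauto.
  - exfalso; apply Hnex; eauto.
Qed.

Lemma ex_series_inside a x : Rbar_lt (Rabs x) (CV_radius a) ->
  ex_series (fun k => a k * x ^ k).
Proof. intros Hx. apply ex_series_Rabs. now apply CV_disk_inside. Qed.

Lemma ps_eval_PSeries a x : Rbar_lt (Rabs x) (CV_radius a) -> ps_eval a x = PSeries a x.
Proof.
  intros Hx. apply series_sum_correct, Series_correct. now apply ex_series_inside.
Qed.

Lemma Rbar_lt_Rabs (r : Rbar) t : 0 <= t -> Rbar_lt t r -> Rbar_lt (Rabs t) r.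
Proof. intros Ht Htr. now rewrite Rabs_pos_eq. Qed.

Lemma deriv_of_is_derive f x l : is_derive f x l -> deriv f x = l.
Proof. intros Hf. apply deriv_correct, is_derive_Reals, Hf. Qed.

Lemma locally_inside_radius x (r : Rbar) : Rbar_lt (Rabs x) r ->
  locally x (fun y => Rbar_lt (Rabs y) r).
Proof.
  intros Hx. destruct r as [r| |]; simpl in Hx; [|now exists (mkposreal 1 Rlt_0_1)|easy].
  assert (Hd : 0 < r - Rabs x) by lra. exists (mkposreal _ Hd). intros y Hy.
  change (Rabs (y - x) < r - Rabs x) in Hy. pose proof (Rabs_triang_inv y x). simpl; lra.
Qed.

Lemma continuity_pt_lt_right f x (r : Rbar) c : continuity_pt f x -> f x < c ->
  Rbar_lt x r -> exists t, x < t /\ Rbar_lt t r /\ f t < c.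
Proof.
  intros Hf Hfx Hxr. destruct (Hf (c - f x)) as [d [Hd Hclose]]; [lra|].
  assert (Hstep : exists e, 0 < e < d /\ Rbar_lt (x + e) r).
  { destruct r as [r| |]; simpl in Hxr; [|exists (d / 2); simpl; split; [lra|easy]|easy].
    exists (Rmin d (r - x) / 2). pose proof (Rmin_l d (r - x)); pose proof (Rmin_r d (r - x)).
    assert (0 < Rmin d (r - x)) by (apply Rmin_glb_lt; lra). simpl. lra. }
  destruct Hstep as [e [He Her]]. exists (x + e). split; [lra|]. split; [exact Her|].
  assert (Hdist : dist R_met (f (x + e)) (f x) < c - f x).
  { apply Hclose. split; [split; [exact I|lra]|].
    simpl. unfold Rdist. replace (x + e - x) with e by ring. rewrite Rabs_pos_eq; lra. }
  simpl in Hdist. unfold Rdist in Hdist. pose proof (Rle_abs (f (x + e) - f x)). lra.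
Qed.

Lemma IVT_open f a b c : a < b -> (forall x, a <= x <= b -> continuity_pt f x) ->
  f a < c -> c < f b -> exists z, a < z < b /\ f z = c.
Proof.
  intros Hab Hcont Ha Hb.
  destruct (Ranalysis5.IVT_interv (fun t => f t - c) a b) as [z [Hz Hfz]]; try lra.
  - intros x Hx. apply (continuity_pt_minus f (fct_cte c)); auto.
    apply continuity_pt_const. intros ? ?; reflexivity.
  - exists z. split; [|lra]. split; apply Rnot_ge_lt; intros Hge.
    + replace z with a in Hfz by lra. lra.
    + replace z with b in Hfz by lra. lra.
Qed.

(** * Radii of convergence *)

(* [m_infty] never occurs as a radius of convergence. *)
Definition ER_of_Rbar (x : Rbar) : ER :=
  match x with Finite r => Fin r | p_infty => Inf | m_infty => Fin 0 end.

Lemma ER_lt_of_Rbar t (r : Rbar) : Rbar_le 0 r -> (ER_lt (Fin t) (ER_of_Rbar r) <-> Rbar_lt t r).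
Proof. destruct r; simpl; tauto. Qed.

Lemma ER_le_antisym a b : ER_le a b -> ER_le b a -> a = b.
Proof. destruct a, b; simpl; intros; try tauto. f_equal; lra. Qed.

Lemma ER_ge_iff_eq L x : ER_le L (Fin x) -> (ER_le (Fin x) L <-> L = Fin x).
Proof. intros Hle. split; [now apply ER_le_antisym|intros ->; simpl; lra]. Qed.

Lemma ER_lt_not_le x y : ER_lt x y <-> ~ ER_le y x.
Proof. destruct x, y; simpl; split; intros; try lra; tauto. Qed.

Lemma ps_bounded_Rabs a r : 0 <= r ->
  (ps_bounded a r <-> exists M, forall n, Rabs (a n * r ^ n) <= M).
Proof.
  intros Hr. unfold ps_bounded.
  assert (E : forall n, Rabs (a n * r ^ n) = Rabs (a n) * r ^ n).
  { intros n. rewrite Rabs_mult, (Rabs_pos_eq (r ^ n)); [reflexivity|apply pow_le; lra]. }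
  split; intros [M HM]; exists M; intros n; [rewrite E|rewrite <- E]; apply HM.
Qed.

Lemma is_radius_CV_radius a : is_radius a (ER_of_Rbar (CV_radius a)).
Proof.
  destruct (CV_radius_bounded a) as [Hub Hlub]. split.
  - intros r Hr Hbd. apply ps_bounded_Rabs in Hbd; auto. specialize (Hub r Hbd).
    destruct (CV_radius a); simpl in *; tauto.
  - intros [y|] Hb; [|destruct (CV_radius a); simpl; auto].
    assert (Hy : 0 <= y).
    { apply (Hb 0); [lra|]. exists (Rabs (a 0%nat)). intros [|k]; simpl; [lra|].
      rewrite Rmult_0_l, Rmult_0_r. apply Rabs_pos. }
    assert (Hl : Rbar_le (CV_radius a) (Finite y)).
    { apply Hlub. intros r Hr. destruct (Rle_or_lt 0 r) as [H0|H0].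
      - apply (Hb r H0), ps_bounded_Rabs; auto.
      - simpl; lra. }
    destruct (CV_radius a); simpl in *; tauto.
Qed.

Lemma is_radius_unique a r1 r2 : is_radius a r1 -> is_radius a r2 -> r1 = r2.
Proof.
  intros [H1 H1'] [H2 H2']. apply ER_le_antisym; [apply H1' | apply H2']; auto.
Qed.

(** * One-sided limits at the radius *)

Lemma near_left_and rho P Q : near_left rho P -> near_left rho Q ->
  near_left rho (fun t => P t /\ Q t).
Proof.
  destruct rho as [r|]; simpl.
  - intros [d1 [Hd1 H1]] [d2 [Hd2 H2]]. exists (Rmin d1 d2).
    pose proof (Rmin_l d1 d2); pose proof (Rmin_r d1 d2).
    split; [now apply Rmin_glb_lt|]. intros t Ht1 Ht2 Ht3.
    split; [apply H1|apply H2]; auto; lra.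
  - intros [M1 H1] [M2 H2]. exists (Rmax M1 M2).
    pose proof (Rmax_l M1 M2); pose proof (Rmax_r M1 M2).
    intros t Ht. split; [apply H1|apply H2]; lra.
Qed.

Lemma near_left_impl rho (P Q : R -> Prop) : (forall t, P t -> Q t) ->
  near_left rho P -> near_left rho Q.
Proof.
  destruct rho as [r|]; simpl.
  - intros HPQ [d [Hd H]]. exists d. split; auto.
  - intros HPQ [M H]. exists M. auto.
Qed.

Lemma near_left_inside rho : ER_lt (Fin 0) rho ->
  near_left rho (fun t => 0 < t /\ ER_lt (Fin t) rho).
Proof.
  destruct rho as [r|]; simpl; intros Hr.
  - exists r. split; auto. intros t Ht1 Ht2 Ht3. split; lra.
  - exists 0. intros t Ht. split; auto.
Qed.

Lemma near_left_gt rho s : 0 <= s -> ER_lt (Fin s) rho ->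
  near_left rho (fun t => s < t /\ ER_lt (Fin t) rho).
Proof.
  destruct rho as [r|]; simpl; intros Hs Hsr.
  - exists (r - s). split; [lra|]. intros; lra.
  - exists s. intros t Ht. split; auto.
Qed.

Lemma near_left_witness rho P : ER_lt (Fin 0) rho -> near_left rho P -> exists t, P t.
Proof.
  destruct rho as [r|]; simpl; intros Hr.
  - intros [d [Hd H]]. pose proof (Rmin_l d r); pose proof (Rmin_r d r).
    assert (0 < Rmin d r) by (now apply Rmin_glb_lt).
    exists (r - Rmin d r / 2). apply H; lra.
  - intros [M H]. exists (M + 1). apply H; lra.
Qed.

Lemma tends_left_unique f rho L1 L2 : ER_lt (Fin 0) rho ->
  tends_left f rho L1 -> tends_left f rho L2 -> L1 = L2.
Proof.
  intros Hr H1 H2.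
  destruct L1 as [a|], L2 as [b|]; simpl in *; [|exfalso..|reflexivity].
  - destruct (Req_dec a b) as [->|Hab]; [reflexivity|exfalso].
    assert (He : 0 < Rabs (a - b) / 2).
    { assert (0 < Rabs (a - b)) by (apply Rabs_pos_lt; lra). lra. }
    destruct (near_left_witness _ _ Hr (near_left_and _ _ _ (H1 _ He) (H2 _ He)))
      as [t [Ht1 Ht2]].
    pose proof (Rabs_triang (f t - b) (a - f t)).
    replace (f t - b + (a - f t)) with (a - b) in * by ring.
    rewrite Rabs_minus_sym in Ht1. lra.
  - destruct (near_left_witness _ _ Hr (near_left_and _ _ _ (H1 1 Rlt_0_1) (H2 (a + 1))))
      as [t [Ht1 Ht2]].
    pose proof (Rle_abs (f t - a)). lra.
  - destruct (near_left_witness _ _ Hr (near_left_and _ _ _ (H2 1 Rlt_0_1) (H1 (b + 1))))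
      as [t [Ht1 Ht2]].
    pose proof (Rle_abs (f t - b)). lra.
Qed.

Lemma tends_left_monotone f rho : ER_lt (Fin 0) rho ->
  (forall s t, 0 <= s -> s <= t -> ER_lt (Fin t) rho -> f s <= f t) ->
  exists L, tends_left f rho L /\
    (forall t, 0 <= t -> ER_lt (Fin t) rho -> ER_le (Fin (f t)) L) /\
    (forall b, (forall t, 0 <= t -> ER_lt (Fin t) rho -> f t <= b) -> ER_le L (Fin b)).
Proof.
  intros Hr Hmono.
  set (E := fun y => exists t, 0 <= t /\ ER_lt (Fin t) rho /\ y = f t).
  assert (Heventually : forall y, (exists t, 0 <= t /\ ER_lt (Fin t) rho /\ y < f t) ->
            near_left rho (fun t => y < f t /\ 0 < t /\ ER_lt (Fin t) rho)).
  { intros y [s [Hs [Hsr Hys]]].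
    eapply near_left_impl; [|apply (near_left_and _ _ _ (near_left_gt _ _ Hs Hsr)
                                                   (near_left_inside _ Hr))].
    intros t [[Hst Htr] Ht]. split; [|exact Ht].
    pose proof (Hmono s t Hs (Rlt_le _ _ Hst) Htr). lra. }
  destruct (classic (bound E)) as [Hb|Hnb].
  - assert (Hne : exists y, E y).
    { exists (f 0), 0. split; [lra|]. split; [destruct rho; simpl in *; auto|reflexivity]. }
    destruct (completeness E Hb Hne) as [L [HLub HLlub]].
    assert (Hle : forall t, 0 <= t -> ER_lt (Fin t) rho -> f t <= L).
    { intros t Ht Htr. apply HLub. exists t; auto. }
    exists (Fin L). split; [|split].
    + intros eps Heps. simpl.
      destruct (classic (exists t, 0 <= t /\ ER_lt (Fin t) rho /\ L - eps < f t))
        as [Hex|Hno].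
      * eapply near_left_impl; [|exact (Heventually _ Hex)].
        intros t [Hft [Ht Htr]]. pose proof (Hle t (Rlt_le _ _ Ht) Htr).
        rewrite Rabs_left1 by lra. lra.
      * enough (L <= L - eps) by lra. apply HLlub. intros y [t [Ht [Htr ->]]].
        apply Rnot_lt_le. intros Hlt. apply Hno. eauto.
    + intros t Ht Htr. exact (Hle t Ht Htr).
    + intros b Hb'. apply HLlub. intros y [t [Ht [Htr ->]]]. auto.
  - exists Inf. split; [|split; [intros; exact I|]].
    + intros M. apply (near_left_impl _ (fun t => M < f t /\ 0 < t /\ ER_lt (Fin t) rho));
        [tauto|]. apply Heventually.
      apply NNPP. intros Hno. apply Hnb. exists M. intros y [t [Ht [Htr ->]]].
      apply Rnot_lt_le. intros Hlt. apply Hno. eauto.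
    + intros b Hb'. exfalso. apply Hnb. exists b. intros y [t [Ht [Htr ->]]]. auto.
Qed.

Lemma tends_left_one_squeeze f g rho K : 0 < K -> tends_left f rho (Fin 1) ->
  near_left rho (fun t => 0 <= 1 - g t <= K * (1 - f t)) -> tends_left g rho (Fin 1).
Proof.
  intros HK Hf Hsq eps Heps.
  assert (HeK : 0 < eps / K) by (apply Rdiv_lt_0_compat; auto).
  eapply near_left_impl; [|exact (near_left_and _ _ _ (Hf _ HeK) Hsq)].
  intros t [Hft [Hg1 Hg2]]. rewrite Rabs_minus_sym, Rabs_pos_eq by lra.
  rewrite Rabs_minus_sym in Hft. pose proof (Rle_abs (1 - f t)).
  apply (Rmult_lt_compat_l K) in Hft; [|lra].
  replace (K * (eps / K)) with eps in Hft by (field; lra). nra.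
Qed.

(** * Power series with nonnegative coefficients *)

Lemma sum_f_R0_ge_term (u : nat -> R) N j : (forall k, 0 <= u k) -> (j <= N)%nat ->
  u j <= sum_f_R0 u N.
Proof.
  intros Hu Hj. induction N as [|N IH]; simpl.
  - replace j with 0%nat by lia. lra.
  - destruct (Nat.eq_dec j (S N)) as [->|Hne].
    + pose proof (cond_pos_sum u N Hu). lra.
    + pose proof (IH ltac:(lia)). pose proof (Hu (S N)). lra.
Qed.

Lemma Series_ge_term u j : (forall n, 0 <= u n) -> ex_series u -> u j <= Series u.
Proof.
  intros Hu Hex. eapply Rle_trans; [apply (sum_f_R0_ge_term u j j); auto|].
  apply sum_incr; auto. apply is_series_Reals, Series_correct, Hex.
Qed.

Lemma pow_lt_compat s t j : 0 <= s -> s < t -> (1 <= j)%nat -> s ^ j < t ^ j.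
Proof.
  intros Hs Hst Hj. destruct j as [|j]; [lia|]. simpl.
  pose proof (pow_incr s t j ltac:(lra)). pose proof (pow_lt t j ltac:(lra)). nra.
Qed.

Lemma PS_derive_nonneg a : (forall n, 0 <= a n) -> forall n, 0 <= PS_derive a n.
Proof. intros Ha n. apply Rmult_le_pos; auto. apply pos_INR. Qed.

Section NonnegativeCoefficients.

Variable a : nat -> R.
Hypothesis a_nonneg : forall n, 0 <= a n.

Lemma PSeries_le s t : 0 <= s -> s <= t -> Rbar_lt t (CV_radius a) ->
  PSeries a s <= PSeries a t.
Proof.
  intros Hs Hst Ht. apply Series_le.
  - intros n. split.
    + apply Rmult_le_pos; auto. apply pow_le; lra.
    + apply Rmult_le_compat_l; auto. apply pow_incr; lra.
  - apply ex_series_inside, Rbar_lt_Rabs; auto; lra.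
Qed.

Lemma PSeries_ge_term t j : 0 <= t -> Rbar_lt t (CV_radius a) -> a j * t ^ j <= PSeries a t.
Proof.
  intros Ht Htr. apply (Series_ge_term (fun k => a k * t ^ k)).
  - intros n. apply Rmult_le_pos; auto. apply pow_le; lra.
  - apply ex_series_inside, Rbar_lt_Rabs; auto.
Qed.

Lemma PSeries_nonneg t : 0 <= t -> Rbar_lt t (CV_radius a) -> 0 <= PSeries a t.
Proof.
  intros Ht Htr. eapply Rle_trans; [|apply (PSeries_ge_term t 0); auto].
  simpl. rewrite Rmult_1_r. auto.
Qed.

Lemma PSeries_lt j s t : 0 < a j -> (1 <= j)%nat -> 0 <= s -> s < t ->
  Rbar_lt t (CV_radius a) -> PSeries a s < PSeries a t.
Proof.
  intros Haj Hj Hs Hst Ht.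
  assert (Hst' : Rbar_lt (Rabs s) (CV_radius a)).
  { apply Rbar_lt_Rabs; auto. eapply Rbar_le_lt_trans; [|exact Ht]. simpl; lra. }
  assert (Ht' : Rbar_lt (Rabs t) (CV_radius a)) by (apply Rbar_lt_Rabs; auto; lra).
  assert (Hdiff : a j * t ^ j - a j * s ^ j <= PSeries a t - PSeries a s).
  { unfold PSeries. rewrite <- Series_minus by (apply ex_series_inside; auto).
    apply (Series_ge_term (fun n => a n * t ^ n - a n * s ^ n)).
    - intros n. enough (a n * s ^ n <= a n * t ^ n) by lra.
      apply Rmult_le_compat_l; auto. apply pow_incr; lra.
    - apply (ex_series_minus (fun n => a n * t ^ n) (fun n => a n * s ^ n));
        apply ex_series_inside; auto. }
  pose proof (pow_lt_compat s t j Hs Hst Hj). nra.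
Qed.

End NonnegativeCoefficients.
(** * The coefficients of [p(z) = z h(z)] *)

(* [mu_t] for [p = shift_coef h], as computed in [mu_shift_coef]. *)
Definition shift_deriv (h : nat -> R) (t : R) : R :=
  PSeries h t + t * PSeries (PS_derive h) t.

Lemma CV_radius_shift_coef h : CV_radius (shift_coef h) = CV_radius h.
Proof.
  rewrite <- (CV_radius_incr_1 h). apply CV_radius_ext. intros [|n]; reflexivity.
Qed.

Lemma PSeries_shift_coef h y : PSeries (shift_coef h) y = y * PSeries h y.
Proof. rewrite <- PSeries_incr_1. apply PSeries_ext. intros [|n]; reflexivity. Qed.

Lemma is_radius_shift_coef h : is_radius (shift_coef h) (ER_of_Rbar (CV_radius h)).
Proof. rewrite <- CV_radius_shift_coef. apply is_radius_CV_radius. Qed.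

Lemma mu_shift_coef h x : Rbar_lt (Rabs x) (CV_radius h) ->
  mu (shift_coef h) x = shift_deriv h x.
Proof.
  intros Hx. apply deriv_of_is_derive.
  apply (is_derive_ext_loc (fun y => y * PSeries h y)).
  - eapply filter_imp; [|exact (locally_inside_radius x _ Hx)]. intros y Hy.
    rewrite ps_eval_PSeries by (now rewrite CV_radius_shift_coef).
    symmetry; apply PSeries_shift_coef.
  - apply is_derive_Reals. unfold shift_deriv.
    replace (PSeries h x + x * PSeries (PS_derive h) x)
      with (1 * PSeries h x + id x * PSeries (PS_derive h) x) by (unfold id; ring).
    apply (derivable_pt_lim_mult id (PSeries h)); [apply derivable_pt_lim_id|].
    now apply is_derive_Reals, is_derive_PSeries.
Qed.

(** * The coefficients of [1 / (1 - h)] *)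

Lemma sum_kdelta (f : nat -> R) n : sum_f_R0 (fun k => kdelta k * f k) n = f 0%nat.
Proof. induction n as [|n IH]; simpl; [lra|]. rewrite IH. lra. Qed.

Lemma is_series_kdelta (f : nat -> R) : is_series (fun k => kdelta k * f k) (f 0%nat).
Proof.
  apply is_series_Reals. intros eps Heps. exists 0%nat. intros n _.
  rewrite sum_kdelta. unfold Rdist. rewrite Rminus_diag, Rabs_R0. lra.
Qed.

Lemma kdelta_nonneg n : 0 <= kdelta n.
Proof. destruct n; simpl; lra. Qed.

Section InverseSeries.

Variables h w : nat -> R.
Hypothesis h0 : h 0%nat = 0.
Hypothesis h_nonneg : forall k, 0 <= h k.
Hypothesis hw : is_inv_one_minus h w.

Lemma inv_one_minus_rec n : w n = kdelta n + sum_f_R0 (fun k => h k * w (n - k)%nat) n.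
Proof.
  pose proof (hw n) as Hn.
  rewrite (sum_eq _ (fun k => kdelta k * w (n - k)%nat - h k * w (n - k)%nat)) in Hn
    by (intros; ring).
  rewrite minus_sum, (sum_kdelta (fun k => w (n - k)%nat)), Nat.sub_0_r in Hn. lra.
Qed.

Lemma inv_one_minus_0 : w 0%nat = 1.
Proof. rewrite inv_one_minus_rec. simpl. rewrite h0. lra. Qed.

Lemma inv_one_minus_nonneg n : 0 <= w n.
Proof.
  induction n as [n IH] using (well_founded_induction Wf_nat.lt_wf).
  destruct (Nat.eq_dec n 0) as [->|Hn]; [rewrite inv_one_minus_0; lra|].
  rewrite inv_one_minus_rec. pose proof (kdelta_nonneg n).
  enough (0 <= sum_f_R0 (fun k => h k * w (n - k)%nat) n) by lra.
  apply cond_pos_sum. intros [|k].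
  - rewrite h0; lra.
  - apply Rmult_le_pos; auto. apply IH. lia.
Qed.

Lemma inv_one_minus_ge n : h n <= w n.
Proof.
  rewrite inv_one_minus_rec. pose proof (kdelta_nonneg n).
  assert (Hterm : h n * w (n - n)%nat <= sum_f_R0 (fun k => h k * w (n - k)%nat) n).
  { apply (sum_f_R0_ge_term (fun k => h k * w (n - k)%nat)); auto.
    intros; apply Rmult_le_pos; auto using inv_one_minus_nonneg. }
  rewrite Nat.sub_diag, inv_one_minus_0 in Hterm. lra.
Qed.

Lemma CV_radius_inv_one_minus_le : Rbar_le (CV_radius w) (CV_radius h).
Proof.
  destruct (CV_radius_bounded w) as [_ Hlub]. destruct (CV_radius_bounded h) as [Hub _].
  apply Hlub. intros r [M HM]. apply Hub. exists M. intros n.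
  eapply Rle_trans; [|apply (HM n)]. rewrite !Rabs_mult.
  apply Rmult_le_compat_r; [apply Rabs_pos|].
  pose proof (inv_one_minus_nonneg n). pose proof (inv_one_minus_ge n).
  rewrite !Rabs_pos_eq; auto.
Qed.

Lemma partial_sums_inv_one_minus_le t N : 0 <= t ->
  sum_f_R0 (fun n => w n * t ^ n) N <=
  1 + sum_f_R0 (fun n => h n * t ^ n) N * sum_f_R0 (fun n => w n * t ^ n) N.
Proof.
  intros Ht.
  assert (Hterm : forall a n, (forall k, 0 <= a k) -> 0 <= a n * t ^ n)
    by (intros; apply Rmult_le_pos; auto; apply pow_le; lra).
  set (conv := fun n => sum_f_R0 (fun k => (h k * t ^ k) * (w (n - k)%nat * t ^ (n - k))) n).
  assert (Hrec : sum_f_R0 (fun n => w n * t ^ n) N = 1 + sum_f_R0 conv N).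
  { rewrite (sum_eq _ (fun n => kdelta n * t ^ n + conv n)).
    - rewrite plus_sum, (sum_kdelta (fun n => t ^ n)). reflexivity.
    - intros n _. rewrite inv_one_minus_rec, Rmult_plus_distr_r. f_equal.
      rewrite Rmult_comm, scal_sum. apply sum_eq. intros k Hk.
      replace (t ^ n) with (t ^ k * t ^ (n - k)) by (rewrite <- pow_add; f_equal; lia).
      ring. }
  rewrite Hrec at 1. apply Rplus_le_compat_l. destruct N as [|N].
  - unfold conv. simpl. rewrite h0. lra.
  - rewrite (cauchy_finite (fun n => h n * t ^ n) (fun n => w n * t ^ n)) by lia.
    fold conv. enough (0 <= sum_f_R0 (fun k => sum_f_R0 (fun l => h (S (l + k)) * t ^ S (l + k)
               * (w (S N - l)%nat * t ^ (S N - l))) (pred (S N - k))) (pred (S N))) by lra.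
    apply cond_pos_sum. intros k. apply cond_pos_sum. intros l.
    apply Rmult_le_pos; apply Hterm; auto using inv_one_minus_nonneg.
Qed.

Lemma CV_radius_inv_one_minus_ge t : 0 <= t -> Rbar_lt t (CV_radius h) ->
  PSeries h t < 1 -> Rbar_le t (CV_radius w).
Proof.
  intros Ht Htr HHt.
  assert (Hterm : forall a n, (forall k, 0 <= a k) -> 0 <= a n * t ^ n)
    by (intros; apply Rmult_le_pos; auto; apply pow_le; lra).
  assert (Hbound : forall N, sum_f_R0 (fun n => w n * t ^ n) N <= / (1 - PSeries h t)).
  { intros N. pose proof (partial_sums_inv_one_minus_le t N Ht) as Hle.
    assert (sum_f_R0 (fun n => h n * t ^ n) N <= PSeries h t).
    { apply sum_incr; [|intros; apply Hterm; auto].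
      apply is_series_Reals, Series_correct, ex_series_inside, Rbar_lt_Rabs; auto. }
    pose proof (cond_pos_sum (fun n => h n * t ^ n) N (fun n => Hterm h n h_nonneg)).
    pose proof (cond_pos_sum (fun n => w n * t ^ n) N (fun n => Hterm w n inv_one_minus_nonneg)).
    apply (Rmult_le_reg_r (1 - PSeries h t)); [lra|]. rewrite Rinv_l by lra. nra. }
  destruct (CV_radius_bounded w) as [Hub _]. apply Hub.
  exists (/ (1 - PSeries h t)). intros n.
  rewrite Rabs_pos_eq by (apply Hterm, inv_one_minus_nonneg).
  eapply Rle_trans; [|apply (Hbound n)].
  apply (sum_f_R0_ge_term (fun n => w n * t ^ n)); auto using inv_one_minus_nonneg.
Qed.

Lemma PSeries_inv_one_minus x : Rbar_lt (Rabs x) (CV_radius w) ->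
  (1 - PSeries h x) * PSeries w x = 1.
Proof.
  intros Hx.
  assert (Hxh : Rbar_lt (Rabs x) (CV_radius h))
    by (eapply Rbar_lt_le_trans; [exact Hx|apply CV_radius_inv_one_minus_le]).
  set (a := fun k => (kdelta k - h k) * x ^ k).
  set (b := fun k => w k * x ^ k).
  assert (Ha : is_series a (1 - PSeries h x)).
  { pose proof (is_series_minus _ _ _ _ (is_series_kdelta (fun k => x ^ k))
       (Series_correct _ (ex_series_inside h x Hxh))) as Hdiff.
    eapply is_series_ext; [|exact Hdiff]. intros n. unfold a. simpl.
    change (plus (kdelta n * x ^ n) (opp (h n * x ^ n)))
      with (kdelta n * x ^ n + - (h n * x ^ n)). ring. }
  assert (Hb : is_series b (PSeries w x)) by (apply Series_correct, ex_series_inside; auto).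
  assert (Haa : ex_series (fun n => Rabs (a n))).
  { apply (@ex_series_le _ R_CompleteNormedModule _
             (fun n => kdelta n * Rabs (x ^ n) + Rabs (h n * x ^ n))).
    - intros n. change (norm (Rabs (a n))) with (Rabs (Rabs (a n))). rewrite Rabs_Rabsolu.
      unfold a. rewrite Rmult_minus_distr_r.
      eapply Rle_trans; [apply Rabs_triang|]. rewrite Rabs_Ropp.
      rewrite (Rabs_mult (kdelta n)), (Rabs_pos_eq (kdelta n)) by apply kdelta_nonneg. lra.
    - apply (ex_series_plus (fun n => kdelta n * Rabs (x ^ n)) (fun n => Rabs (h n * x ^ n))).
      + eexists. apply (is_series_kdelta (fun n => Rabs (x ^ n))).
      + now apply CV_disk_inside. }
  assert (Hbb : ex_series (fun n => Rabs (b n))) by (now apply CV_disk_inside).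
  assert (Hprod : is_series (fun n => kdelta n * x ^ n) ((1 - PSeries h x) * PSeries w x)).
  { eapply is_series_ext; [|exact (is_series_mult a b _ _ Ha Hb Haa Hbb)].
    intros n. simpl. unfold a, b.
    rewrite (sum_eq _ (fun k => ((kdelta k - h k) * w (n - k)%nat) * x ^ n)).
    - rewrite <- scal_sum, (hw n). ring.
    - intros k Hk.
      replace (x ^ n) with (x ^ k * x ^ (n - k)) by (rewrite <- pow_add; f_equal; lia).
      ring. }
  rewrite <- (is_series_unique _ _ Hprod).
  exact (is_series_unique _ _ (is_series_kdelta (fun n => x ^ n))).
Qed.

Lemma PSeries_lt_1_inside t : 0 <= t -> Rbar_lt t (CV_radius w) -> PSeries h t < 1.
Proof.
  intros Ht Htr.
  pose proof (PSeries_inv_one_minus t (Rbar_lt_Rabs _ t Ht Htr)) as Hprod.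
  pose proof (PSeries_ge_term w inv_one_minus_nonneg t 0 Ht Htr) as Hw0.
  rewrite inv_one_minus_0 in Hw0. simpl in Hw0. nra.
Qed.

Lemma psi_inv_one_minus x : Rbar_lt (Rabs x) (CV_radius w) ->
  psi w x = x * PSeries (PS_derive h) x / (1 - PSeries h x).
Proof.
  intros Hx.
  assert (Hxh : Rbar_lt (Rabs x) (CV_radius h))
    by (eapply Rbar_lt_le_trans; [exact Hx|apply CV_radius_inv_one_minus_le]).
  assert (Hne : forall y, Rbar_lt (Rabs y) (CV_radius w) -> 1 - PSeries h y <> 0).
  { intros y Hy E. pose proof (PSeries_inv_one_minus y Hy) as Hprod.
    rewrite E in Hprod. lra. }
  assert (Heval : forall y, Rbar_lt (Rabs y) (CV_radius w) ->
                    ps_eval w y = / (1 - PSeries h y)).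
  { intros y Hy. rewrite ps_eval_PSeries by exact Hy.
    pose proof (PSeries_inv_one_minus y Hy). pose proof (Hne y Hy).
    apply (Rmult_eq_reg_l (1 - PSeries h y)); auto. rewrite Rinv_r; auto. }
  assert (Hd : is_derive (fun y => / (1 - PSeries h y)) x
                 (- (0 - PSeries (PS_derive h) x) / (1 - PSeries h x) ^ 2)).
  { apply (is_derive_inv (fun y => 1 - PSeries h y)); [|now apply Hne].
    apply is_derive_Reals.
    apply (derivable_pt_lim_minus (fct_cte 1) (PSeries h));
      [apply derivable_pt_lim_const|].
    now apply is_derive_Reals, is_derive_PSeries. }
  assert (Hdw : is_derive (ps_eval w) x
                  (- (0 - PSeries (PS_derive h) x) / (1 - PSeries h x) ^ 2)).
  { eapply is_derive_ext_loc; [|exact Hd].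
    eapply filter_imp; [|exact (locally_inside_radius x _ Hx)].
    intros y Hy. symmetry. now apply Heval. }
  unfold psi. rewrite (deriv_of_is_derive _ _ _ Hdw), Heval by exact Hx.
  field. now apply Hne.
Qed.

End InverseSeries.

(** * Types and thresholds from the limits at the radius *)

Definition limit_type (L : ER) (T : seqtype) : Prop :=
  match T with
  | TypeI => ER_le (Fin 1) L
  | TypeII => ER_lt (Fin 0) L /\ ER_lt L (Fin 1)
  | TypeIII => False
  end.

Lemma limit_type_iff nu m T : ER_lt (Fin 0) nu -> ER_lt (Fin 0) m ->
  (ER_le (Fin 1) nu <-> ER_le (Fin 1) m) -> (limit_type nu T <-> limit_type m T).
Proof. intros Hnu Hm Heq. destruct T; simpl; rewrite ?ER_lt_not_le; tauto. Qed.

Lemma weight_type_iff w rho nu T : is_radius w rho -> ER_lt (Fin 0) rho ->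
  tends_left (psi w) rho nu -> (weight_type w T <-> limit_type nu T).
Proof.
  intros Hw Hrho Hnu. destruct T; simpl.
  - split; [|intros; exists rho, nu; tauto].
    intros [rho' [nu' [Hw' [_ [Hnu' Hle]]]]]. rewrite (is_radius_unique _ _ _ Hw' Hw) in Hnu'.
    now rewrite (tends_left_unique _ _ _ _ Hrho Hnu' Hnu) in Hle.
  - split; [|intros; exists rho, nu; tauto].
    intros [rho' [nu' [Hw' [_ [Hnu' Hlt]]]]]. rewrite (is_radius_unique _ _ _ Hw' Hw) in Hnu'.
    now rewrite (tends_left_unique _ _ _ _ Hrho Hnu' Hnu) in Hlt.
  - split; [|easy]. intros Hw0. rewrite <- (is_radius_unique _ _ _ Hw0 Hw) in Hrho.
    simpl in Hrho; lra.
Qed.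

Lemma offspring_type_iff p rho m T : is_radius p rho -> ER_lt (Fin 0) rho ->
  tends_left (mu p) rho m -> (offspring_type p T <-> limit_type m T).
Proof.
  intros Hp Hrho Hm. destruct T; simpl.
  - split; [|intros; exists rho, m; tauto].
    intros [rho' [m' [Hp' [_ [Hm' Hle]]]]]. rewrite (is_radius_unique _ _ _ Hp' Hp) in Hm'.
    now rewrite (tends_left_unique _ _ _ _ Hrho Hm' Hm) in Hle.
  - split; [|intros; exists rho, m; tauto].
    intros [rho' [m' [Hp' [_ [Hm' Hlt]]]]]. rewrite (is_radius_unique _ _ _ Hp' Hp) in Hm'.
    now rewrite (tends_left_unique _ _ _ _ Hrho Hm' Hm) in Hlt.
  - split; [|easy]. intros Hp0. rewrite <- (is_radius_unique _ _ _ Hp0 Hp) in Hrho.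
    simpl in Hrho; lra.
Qed.

Lemma weight_type_radius_0 w T : is_radius w (Fin 0) -> (weight_type w T <-> T = TypeIII).
Proof.
  intros Hw. destruct T; simpl; [| |tauto];
    (split; [|discriminate]); intros [rho [nu [Hw' [Hrho _]]]];
    rewrite (is_radius_unique _ _ _ Hw' Hw) in Hrho; simpl in Hrho; lra.
Qed.

Lemma offspring_type_radius_0 p T : is_radius p (Fin 0) -> (offspring_type p T <-> T = TypeIII).
Proof.
  intros Hp. destruct T; simpl; [| |tauto];
    (split; [|discriminate]); intros [rho [m [Hp' [Hrho _]]]];
    rewrite (is_radius_unique _ _ _ Hp' Hp) in Hrho; simpl in Hrho; lra.
Qed.

Lemma tau_spec_radius_0 w : is_radius w (Fin 0) ->
  tau_spec w (Fin 0) /\ forall y, tau_spec w y -> y = Fin 0.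
Proof.
  intros Hw. split; [exists (Fin 0); auto|].
  intros y [rho [Hw' [[_ Hy]|[Hrho _]]]]; auto.
  rewrite (is_radius_unique _ _ _ Hw' Hw) in Hrho. simpl in Hrho; lra.
Qed.

Lemma t0_spec_radius_0 p : is_radius p (Fin 0) ->
  t0_spec p (Fin 0) /\ forall y, t0_spec p y -> y = Fin 0.
Proof.
  intros Hp. split; [exists (Fin 0); auto|].
  intros y [rho [Hp' [[_ Hy]|[Hrho _]]]]; auto.
  rewrite (is_radius_unique _ _ _ Hp' Hp) in Hrho. simpl in Hrho; lra.
Qed.

Section Thresholds.

Variables (w p : nat -> R) (rw rp nu m : ER).
Hypotheses (w_radius : is_radius w rw) (p_radius : is_radius p rp).
Hypotheses (rw_pos : ER_lt (Fin 0) rw) (rp_pos : ER_lt (Fin 0) rp).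
Hypotheses (w_limit : tends_left (psi w) rw nu) (p_limit : tends_left (mu p) rp m).

Lemma tau_spec_root z : ~ ER_le nu (Fin 1) -> 0 < z -> ER_lt (Fin z) rw -> psi w z = 1 ->
  (forall t, 0 < t -> ER_lt (Fin t) rw -> psi w t = 1 -> t = z) ->
  tau_spec w (Fin z) /\ forall y, tau_spec w y -> y = Fin z.
Proof.
  intros Hnu Hz Hzr Hpsi Huniq. split.
  - exists rw. split; auto. right. split; auto. exists nu. split; auto.
    left. rewrite <- ER_lt_not_le in Hnu.
    split; [destruct nu; simpl in *; auto; lra|]. split; [simpl; lra|]. left. eauto.
  - intros y [rho [Hw' [[Hrho _]|[_ [nu' [Hnu' Hcases]]]]]].
    + rewrite (is_radius_unique _ _ _ Hw' w_radius) in Hrho. subst. simpl in rw_pos; lra.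
    + rewrite (is_radius_unique _ _ _ Hw' w_radius) in *.
      rewrite (tends_left_unique _ _ _ _ rw_pos Hnu' w_limit) in Hcases.
      destruct Hcases as [[_ [Hy [[t [-> [Htr Ht]]]|[_ ->]]]]|[Hlt _]].
      * simpl in Hy. f_equal. auto.
      * exfalso. apply Hnu. simpl; lra.
      * exfalso. apply Hnu. destruct nu; simpl in *; lra.
Qed.

Lemma t0_spec_root z : ~ ER_le m (Fin 1) -> 0 <= z -> ER_lt (Fin z) rp -> mu p z = 1 ->
  (forall t, 0 <= t -> ER_lt (Fin t) rp -> mu p t = 1 -> t = z) ->
  t0_spec p (Fin z) /\ forall y, t0_spec p y -> y = Fin z.
Proof.
  intros Hm Hz Hzr Hmu Huniq. split.
  - exists rp. split; auto. right. split; auto. exists m. split; auto.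
    left. rewrite <- ER_lt_not_le in Hm.
    split; [destruct m; simpl in *; auto; lra|]. left. eauto.
  - intros y [rho [Hp' [[Hrho _]|[_ [m' [Hm' Hcases]]]]]].
    + rewrite (is_radius_unique _ _ _ Hp' p_radius) in Hrho. subst. simpl in rp_pos; lra.
    + rewrite (is_radius_unique _ _ _ Hp' p_radius) in *.
      rewrite (tends_left_unique _ _ _ _ rp_pos Hm' p_limit) in Hcases.
      destruct Hcases as [[_ [[t [-> [Ht [Htr Hmut]]]]|[_ ->]]]|[_ [Hlt _]]].
      * f_equal. auto.
      * exfalso. apply Hm. simpl; lra.
      * exfalso. apply Hm. destruct m; simpl in *; lra.
Qed.

Lemma tau_spec_no_root : ER_le nu (Fin 1) ->
  (forall t, 0 < t -> ER_lt (Fin t) rw -> psi w t <> 1) ->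
  tau_spec w rw /\ forall y, tau_spec w y -> y = rw.
Proof.
  intros Hnu Hnone. split.
  - exists rw. split; auto. right. split; auto. exists nu. split; auto.
    destruct nu as [x|]; simpl in Hnu; [|contradiction].
    destruct (Req_dec x 1) as [->|Hx].
    + left. split; [simpl; lra|]. auto.
    + right. split; auto. simpl; lra.
  - intros y [rho [Hw' [[Hrho _]|[_ [nu' [Hnu' Hcases]]]]]].
    + rewrite (is_radius_unique _ _ _ Hw' w_radius) in Hrho. subst. simpl in rw_pos; lra.
    + rewrite (is_radius_unique _ _ _ Hw' w_radius) in *.
      rewrite (tends_left_unique _ _ _ _ rw_pos Hnu' w_limit) in Hcases.
      destruct Hcases as [[_ [Hy [[t [-> [Htr Ht]]]|[-> _]]]]|[_ ->]]; auto.
      simpl in Hy. exfalso. exact (Hnone t Hy Htr Ht).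
Qed.

Lemma t0_spec_no_root : ER_lt (Fin 0) m -> ER_le m (Fin 1) ->
  (forall t, 0 <= t -> ER_lt (Fin t) rp -> mu p t <> 1) ->
  t0_spec p rp /\ forall y, t0_spec p y -> y = rp.
Proof.
  intros Hm0 Hm Hnone. split.
  - exists rp. split; auto. right. split; auto. exists m. split; auto.
    destruct m as [x|]; simpl in Hm; [|contradiction].
    destruct (Req_dec x 1) as [->|Hx].
    + left. split; [simpl; lra|]. auto.
    + right. repeat split; auto. simpl; lra.
  - intros y [rho [Hp' [[Hrho _]|[_ [m' [Hm' Hcases]]]]]].
    + rewrite (is_radius_unique _ _ _ Hp' p_radius) in Hrho. subst. simpl in rp_pos; lra.
    + rewrite (is_radius_unique _ _ _ Hp' p_radius) in *.
      rewrite (tends_left_unique _ _ _ _ rp_pos Hm' p_limit) in Hcases.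
      destruct Hcases as [[_ [[t [-> [Ht [Htr Hmut]]]]|[-> _]]]|[_ [_ ->]]]; auto.
      exfalso. exact (Hnone t Ht Htr Hmut).
Qed.

End Thresholds.

Definition types_and_thresholds_agree (w p : nat -> R) : Prop :=
  (forall T, weight_type w T <-> offspring_type p T) /\
  (exists x, tau_spec w x /\ t0_spec p x /\
     (forall y, tau_spec w y -> y = x) /\ (forall y, t0_spec p y -> y = x)).

Lemma types_and_thresholds_agree_intro w p rw rp nu m x :
  is_radius w rw -> is_radius p rp -> ER_lt (Fin 0) rw -> ER_lt (Fin 0) rp ->
  tends_left (psi w) rw nu -> tends_left (mu p) rp m ->
  ER_lt (Fin 0) nu -> ER_lt (Fin 0) m -> (ER_le (Fin 1) nu <-> ER_le (Fin 1) m) ->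
  tau_spec w x /\ (forall y, tau_spec w y -> y = x) ->
  t0_spec p x /\ (forall y, t0_spec p y -> y = x) ->
  types_and_thresholds_agree w p.
Proof.
  intros Hw Hp Hrw Hrp Hnu Hm Hnu0 Hm0 Heq Htau Ht0. split; [|exists x; tauto].
  intros T. rewrite (weight_type_iff w rw nu), (offspring_type_iff p rp m); auto.
  now apply limit_type_iff.
Qed.

(** * The classification *)

Section Classification.

Variables (h w : nat -> R) (k0 : nat).
Hypothesis h0 : h 0%nat = 0.
Hypothesis h_nonneg : forall k, 0 <= h k.
Hypothesis hw : is_inv_one_minus h w.
Hypothesis hk0_pos : 0 < h k0.
Hypothesis hk0_ge1 : (1 <= k0)%nat.

Lemma PSeries_derive_pos t : 0 < t -> Rbar_lt t (CV_radius h) ->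
  0 < PSeries (PS_derive h) t.
Proof.
  intros Ht Htr. rewrite <- CV_radius_derive in Htr.
  eapply Rlt_le_trans;
    [|apply (PSeries_ge_term _ (PS_derive_nonneg h h_nonneg) t (k0 - 1)); auto; lra].
  apply Rmult_lt_0_compat; [|apply pow_lt; lra]. unfold PS_derive.
  replace (S (k0 - 1)) with k0 by lia.
  apply Rmult_lt_0_compat; auto. apply lt_0_INR; lia.
Qed.

Lemma PSeries_derive_le s t : 0 <= s -> s <= t -> Rbar_lt t (CV_radius h) ->
  PSeries (PS_derive h) s <= PSeries (PS_derive h) t.
Proof.
  intros Hs Hst Ht. apply PSeries_le; auto using PS_derive_nonneg.
  now rewrite CV_radius_derive.
Qed.

Lemma shift_deriv_0 : shift_deriv h 0 = 0.
Proof. unfold shift_deriv. rewrite PSeries_0, h0. ring. Qed.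

Lemma shift_deriv_lt s t : 0 <= s -> s < t -> Rbar_lt t (CV_radius h) ->
  shift_deriv h s < shift_deriv h t.
Proof.
  intros Hs Hst Ht. unfold shift_deriv.
  assert (Hsr : Rbar_lt s (CV_radius h))
    by (eapply Rbar_le_lt_trans; [|exact Ht]; simpl; lra).
  pose proof (PSeries_lt h h_nonneg k0 s t hk0_pos hk0_ge1 Hs Hst Ht).
  pose proof (PSeries_derive_le s t Hs (Rlt_le _ _ Hst) Ht).
  pose proof (PSeries_nonneg _ (PS_derive_nonneg h h_nonneg) s Hs
                ltac:(now rewrite CV_radius_derive)).
  nra.
Qed.

Lemma shift_deriv_inj s t : 0 <= s -> 0 <= t -> Rbar_lt s (CV_radius h) ->
  Rbar_lt t (CV_radius h) -> shift_deriv h s = shift_deriv h t -> s = t.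
Proof.
  intros Hs Ht Hsr Htr E. destruct (Rtotal_order s t) as [Hlt|[Heq|Hgt]]; auto.
  - pose proof (shift_deriv_lt s t Hs Hlt Htr). lra.
  - pose proof (shift_deriv_lt t s Ht Hgt Hsr). lra.
Qed.

Lemma shift_deriv_continuous t : 0 <= t -> Rbar_lt t (CV_radius h) ->
  continuity_pt (shift_deriv h) t.
Proof.
  intros Ht Htr. apply Rbar_lt_Rabs in Htr; auto.
  apply (continuity_pt_plus (PSeries h) (fun t => t * PSeries (PS_derive h) t)).
  - now apply PSeries_continuity.
  - apply (continuity_pt_mult id (PSeries (PS_derive h))).
    + apply derivable_continuous_pt, derivable_pt_id.
    + apply PSeries_continuity. now rewrite CV_radius_derive.
Qed.

(* [H < 1] near [0] by continuity, and [H(t) < 1] forces [t <= rho_w]. *)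
Lemma CV_radius_inv_one_minus_pos : Rbar_lt 0 (CV_radius h) -> Rbar_lt 0 (CV_radius w).
Proof.
  intros Hh.
  assert (Hcont : continuity_pt (PSeries h) 0)
    by (apply PSeries_continuity; now rewrite Rabs_R0).
  destruct (continuity_pt_lt_right (PSeries h) 0 (CV_radius h) 1 Hcont) as [t [Ht [Htr HHt]]];
    [rewrite PSeries_0, h0; lra|exact Hh|].
  eapply Rbar_lt_le_trans; [|exact (CV_radius_inv_one_minus_ge h w h0 h_nonneg hw t
                                       ltac:(lra) Htr HHt)].
  exact Ht.
Qed.

(* On [0, rho_w) we have [h_k0 t^k0 <= H(t) < 1], which bounds [t]. *)
Lemma CV_radius_inv_one_minus_finite : exists rw, CV_radius w = Finite rw.
Proof.
  set (T := Rmax 1 (/ h k0)).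
  assert (HT1 : 1 <= T) by apply Rmax_l.
  assert (HT2 : / h k0 <= T) by apply Rmax_r.
  assert (HwT : Rbar_le (CV_radius w) T).
  { apply Rbar_not_lt_le. intros Hlt.
    pose proof (PSeries_lt_1_inside h w h0 h_nonneg hw T ltac:(lra) Hlt) as HHT.
    assert (HTh : Rbar_lt T (CV_radius h))
      by (eapply Rbar_lt_le_trans; [exact Hlt|apply CV_radius_inv_one_minus_le; auto]).
    pose proof (PSeries_ge_term h h_nonneg T k0 ltac:(lra) HTh).
    assert (T <= T ^ k0).
    { destruct k0 as [|k]; [lia|]. simpl. rewrite <- (Rmult_1_r T) at 1.
      apply Rmult_le_compat_l; [lra|]. apply pow_R1_Rle. lra. }
    assert (1 <= h k0 * T).
    { apply (Rmult_le_compat_l (h k0)) in HT2; [|lra]. rewrite Rinv_r in HT2 by lra. lra. }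
    nra. }
  pose proof (CV_radius_ge_0 w).
  destruct (CV_radius w) as [rw| |]; simpl in *; [eauto|contradiction|contradiction].
Qed.

Section PositiveRadius.

Variable rw : R.
Hypothesis rw_def : CV_radius w = Finite rw.
Hypothesis rw_pos : 0 < rw.

Let rp := ER_of_Rbar (CV_radius h).

Lemma inside_radius_h t : t < rw -> Rbar_lt t (CV_radius h).
Proof.
  intros Ht. eapply Rbar_lt_le_trans; [|apply (CV_radius_inv_one_minus_le h w); auto].
  now rewrite rw_def.
Qed.

Lemma inside_rp t : t < rw -> ER_lt (Fin t) rp.
Proof.
  intros Ht. apply ER_lt_of_Rbar; [apply CV_radius_ge_0|]. now apply inside_radius_h.
Qed.

Lemma PSeries_lt_1 t : 0 <= t -> t < rw -> PSeries h t < 1.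
Proof.
  intros Ht Htr. apply (PSeries_lt_1_inside h w); auto. now rewrite rw_def.
Qed.

Lemma psi_eq t : 0 <= t -> t < rw ->
  psi w t = t * PSeries (PS_derive h) t / (1 - PSeries h t).
Proof.
  intros Ht Htr. apply (psi_inv_one_minus h w); auto.
  rewrite rw_def, Rabs_pos_eq; auto.
Qed.

Lemma psi_minus_one t : 0 <= t -> t < rw ->
  psi w t - 1 = (shift_deriv h t - 1) / (1 - PSeries h t).
Proof.
  intros Ht Htr. pose proof (PSeries_lt_1 t Ht Htr).
  rewrite psi_eq by auto. unfold shift_deriv. field. lra.
Qed.

Lemma psi_eq_one_iff t : 0 <= t -> t < rw -> (psi w t = 1 <-> shift_deriv h t = 1).
Proof.
  intros Ht Htr. pose proof (PSeries_lt_1 t Ht Htr). pose proof (psi_minus_one t Ht Htr).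
  split; intros E.
  - assert (Hz : (shift_deriv h t - 1) / (1 - PSeries h t) = 0) by lra.
    apply Rmult_integral in Hz as [Hz|Hz]; [lra|].
    exfalso. apply Rinv_neq_0_compat in Hz; auto. lra.
  - rewrite E, Rminus_diag in *. unfold Rdiv in *. lra.
Qed.

(* [t H'(t)] increases and [1 - H(t)] decreases to a positive value. *)
Lemma psi_le s t : 0 <= s -> s <= t -> t < rw -> psi w s <= psi w t.
Proof.
  intros Hs Hst Ht. rewrite !psi_eq by lra.
  pose proof (PSeries_lt_1 t ltac:(lra) Ht).
  pose proof (PSeries_le h h_nonneg s t Hs Hst (inside_radius_h t Ht)).
  pose proof (PSeries_derive_le s t Hs Hst (inside_radius_h t Ht)).
  pose proof (PSeries_nonneg _ (PS_derive_nonneg h h_nonneg) s Hs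
                ltac:(rewrite CV_radius_derive; apply inside_radius_h; lra)).
  unfold Rdiv. apply Rmult_le_compat.
  - apply Rmult_le_pos; lra.
  - apply Rlt_le, Rinv_0_lt_compat. lra.
  - nra.
  - apply Rinv_le_contravar; lra.
Qed.

Lemma psi_pos t : 0 < t -> t < rw -> 0 < psi w t.
Proof.
  intros Ht Htr. rewrite psi_eq by lra. pose proof (PSeries_lt_1 t ltac:(lra) Htr).
  apply Rdiv_lt_0_compat; [|lra].
  apply Rmult_lt_0_compat; auto. apply PSeries_derive_pos; auto. now apply inside_radius_h.
Qed.

Lemma psi_limit : exists nu, tends_left (psi w) (Fin rw) nu /\ ER_lt (Fin 0) nu /\
  (forall t, 0 <= t -> t < rw -> ER_le (Fin (psi w t)) nu) /\
  (forall b, (forall t, 0 <= t -> t < rw -> psi w t <= b) -> ER_le nu (Fin b)).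
Proof.
  destruct (tends_left_monotone (psi w) (Fin rw)) as [nu [Hnu [Hge Hle]]];
    [exact rw_pos|intros s t Hs Hst Ht; now apply psi_le|].
  exists nu. split; [exact Hnu|]. split; [|split; assumption].
  pose proof (Hge (rw / 2) ltac:(lra) ltac:(simpl; lra)).
  pose proof (psi_pos (rw / 2) ltac:(lra) ltac:(lra)).
  destruct nu; simpl in *; auto; lra.
Qed.

Lemma mu_eq t : 0 <= t -> ER_lt (Fin t) rp -> mu (shift_coef h) t = shift_deriv h t.
Proof.
  intros Ht Htr. apply ER_lt_of_Rbar in Htr; [|apply CV_radius_ge_0].
  apply mu_shift_coef, Rbar_lt_Rabs; auto.
Qed.

Lemma mu_limit : exists m, tends_left (mu (shift_coef h)) rp m /\ ER_lt (Fin 0) m /\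
  (forall t, 0 <= t -> ER_lt (Fin t) rp -> ER_le (Fin (mu (shift_coef h) t)) m) /\
  (forall b, (forall t, 0 <= t -> ER_lt (Fin t) rp -> mu (shift_coef h) t <= b) ->
     ER_le m (Fin b)).
Proof.
  destruct (tends_left_monotone (mu (shift_coef h)) rp) as [m [Hm [Hge Hle]]].
  { apply inside_rp; lra. }
  { intros s t Hs Hst Ht. rewrite !mu_eq by (auto; destruct rp; simpl in *; auto; lra).
    destruct (Req_dec s t) as [->|Hne]; [lra|]. apply Rlt_le, shift_deriv_lt; [lra|lra|].
    apply ER_lt_of_Rbar in Ht; auto. apply CV_radius_ge_0. }
  exists m. split; [exact Hm|]. split; [|split; assumption].
  pose proof (Hge (rw / 2) ltac:(lra) (inside_rp (rw / 2) ltac:(lra))) as Hmh.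
  rewrite mu_eq in Hmh by (lra || (apply inside_rp; lra)).
  pose proof (shift_deriv_lt 0 (rw / 2) ltac:(lra) ltac:(lra) (inside_radius_h (rw / 2) ltac:(lra))).
  rewrite shift_deriv_0 in *. destruct m; simpl in *; auto; lra.
Qed.

Lemma is_radius_w : is_radius w (Fin rw).
Proof. pose proof (is_radius_CV_radius w) as Hw. now rewrite rw_def in Hw. Qed.

(* If [rho_w < rho_h] then [H(rho_w) >= 1], since otherwise [H < 1] slightly
   beyond [rho_w]; hence [mu] exceeds [1] at [rho_w]. *)
Lemma root_of_radius_lt : Rbar_lt rw (CV_radius h) ->
  exists z, 0 < z < rw /\ shift_deriv h z = 1.
Proof.
  intros Hrh.
  assert (HH1 : 1 <= PSeries h rw).
  { apply Rnot_lt_le. intros Hlt.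
    assert (Hcont : continuity_pt (PSeries h) rw)
      by (apply PSeries_continuity, Rbar_lt_Rabs; auto; lra).
    destruct (continuity_pt_lt_right _ _ _ _ Hcont Hlt Hrh) as [t [Ht [Htr HHt]]].
    pose proof (CV_radius_inv_one_minus_ge h w h0 h_nonneg hw t ltac:(lra) Htr HHt) as Hle.
    rewrite rw_def in Hle. simpl in Hle. lra. }
  assert (HF1 : 1 < shift_deriv h rw).
  { unfold shift_deriv. pose proof (PSeries_derive_pos rw rw_pos Hrh). nra. }
  apply IVT_open; [exact rw_pos| |rewrite shift_deriv_0; lra|exact HF1].
  intros x Hx. apply shift_deriv_continuous; [lra|].
  eapply Rbar_le_lt_trans; [|exact Hrh]. simpl; lra.
Qed.

Lemma psi_mu_gt_1_beyond_root z t : 0 < z -> z < t -> t < rw -> shift_deriv h z = 1 ->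
  1 < psi w t /\ 1 < mu (shift_coef h) t.
Proof.
  intros Hz Hzt Ht HFz.
  assert (HFt : 1 < shift_deriv h t)
    by (rewrite <- HFz; apply shift_deriv_lt; [lra|lra|apply inside_radius_h; lra]).
  pose proof (PSeries_lt_1 t ltac:(lra) Ht). split.
  - enough (0 < psi w t - 1) by lra.
    rewrite psi_minus_one by lra. apply Rdiv_lt_0_compat; lra.
  - rewrite mu_eq by (lra || (apply inside_rp; lra)). exact HFt.
Qed.

Lemma types_and_thresholds_agree_root z : 0 < z < rw -> shift_deriv h z = 1 ->
  types_and_thresholds_agree w (shift_coef h).
Proof.
  intros Hz HFz.
  destruct psi_limit as [nu [Hnu [Hnu0 [Hnu_ge _]]]].
  destruct mu_limit as [m [Hm [Hm0 [Hm_ge _]]]].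
  assert (Ht : exists t, z < t < rw) by (exists ((z + rw) / 2); lra).
  destruct Ht as [t Ht].
  destruct (psi_mu_gt_1_beyond_root z t) as [Hpsi Hmu]; try lra.
  assert (Hnu1 : ~ ER_le nu (Fin 1)).
  { pose proof (Hnu_ge t ltac:(lra) ltac:(lra)). destruct nu; simpl in *; lra. }
  assert (Hm1 : ~ ER_le m (Fin 1)).
  { pose proof (Hm_ge t ltac:(lra) (inside_rp t ltac:(lra))). destruct m; simpl in *; lra. }
  assert (Hrp : ER_lt (Fin 0) rp) by (apply inside_rp; lra).
  apply (types_and_thresholds_agree_intro w (shift_coef h) (Fin rw) rp nu m (Fin z));
    auto using is_radius_w, is_radius_shift_coef.
  - split; intros _; [destruct m|destruct nu]; simpl in *; lra || auto.
  - apply (tau_spec_root w (Fin rw) nu is_radius_w rw_pos Hnu z Hnu1); try (simpl; lra).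
    + apply psi_eq_one_iff; auto; lra.
    + intros t' Ht' Ht'r Hpsi'. simpl in Ht'r. apply psi_eq_one_iff in Hpsi'; [|lra|lra].
      apply shift_deriv_inj; auto; try lra; apply inside_radius_h; lra.
  - apply (t0_spec_root (shift_coef h) rp m (is_radius_shift_coef h) Hrp Hm z Hm1); [lra|..].
    + apply inside_rp; lra.
    + rewrite mu_eq; auto; [lra|apply inside_rp; lra].
    + intros t' Ht' Ht'r Hmu'. rewrite mu_eq in Hmu' by auto.
      apply ER_lt_of_Rbar in Ht'r; [|apply CV_radius_ge_0].
      apply shift_deriv_inj; auto; try lra. apply inside_radius_h; lra.
Qed.

Section NoRoot.

Hypothesis no_root : forall z, 0 < z < rw -> shift_deriv h z <> 1.

Lemma shift_deriv_lt_1 t : 0 <= t -> t < rw -> shift_deriv h t < 1.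
Proof.
  intros Ht Htr. apply Rnot_le_lt. intros Hge.
  destruct (Req_dec t 0) as [->|Ht0]; [rewrite shift_deriv_0 in Hge; lra|].
  destruct (Req_dec (shift_deriv h t) 1) as [HF|HF]; [exact (no_root t ltac:(lra) HF)|].
  destruct (IVT_open (shift_deriv h) 0 t 1) as [z [Hz HFz]]; try lra.
  - intros x Hx. apply shift_deriv_continuous; [lra|]. apply inside_radius_h; lra.
  - rewrite shift_deriv_0; lra.
  - exact (no_root z ltac:(lra) HFz).
Qed.

Lemma psi_lt_1 t : 0 <= t -> t < rw -> psi w t < 1.
Proof.
  intros Ht Htr. pose proof (psi_minus_one t Ht Htr). pose proof (PSeries_lt_1 t Ht Htr).
  pose proof (shift_deriv_lt_1 t Ht Htr).
  enough ((shift_deriv h t - 1) / (1 - PSeries h t) < 0) by lra.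
  apply Rdiv_neg_pos; lra.
Qed.

Lemma mu_lt_1 t : 0 <= t -> t < rw -> mu (shift_coef h) t < 1.
Proof.
  intros Ht Htr. rewrite mu_eq by (auto; apply inside_rp; lra). now apply shift_deriv_lt_1.
Qed.

Lemma CV_radius_h_no_root : CV_radius h = Finite rw.
Proof.
  destruct (Rbar_lt_dec rw (CV_radius h)) as [Hlt|Hge].
  - destruct (root_of_radius_lt Hlt) as [z [Hz HFz]]. exfalso. exact (no_root z Hz HFz).
  - apply Rbar_not_lt_le in Hge. apply Rbar_le_antisym; auto.
    rewrite <- rw_def. now apply CV_radius_inv_one_minus_le.
Qed.

Lemma rp_no_root : rp = Fin rw.
Proof. unfold rp. now rewrite CV_radius_h_no_root. Qed.

(* Near [rho_w], [1 - H >= mu - H = t H'(t)] stays away from [0], so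
   [1 - psi = (1 - mu) / (1 - H)] and [1 - mu] are within constant factors. *)
Lemma one_minus_psi_mu_comparable : exists K, 0 < K /\ near_left (Fin rw) (fun t =>
  0 <= 1 - psi w t <= K * (1 - mu (shift_coef h) t) /\
  0 <= 1 - mu (shift_coef h) t <= 1 * (1 - psi w t)).
Proof.
  assert (Hhalf : Rbar_lt (rw / 2) (CV_radius h)) by (apply inside_radius_h; lra).
  set (c := rw / 2 * PSeries (PS_derive h) (rw / 2)).
  assert (Hc : 0 < c).
  { apply Rmult_lt_0_compat; [lra|]. apply PSeries_derive_pos; auto; lra. }
  exists (/ c). split; [now apply Rinv_0_lt_compat|].
  eapply near_left_impl; [|exact (near_left_gt (Fin rw) (rw / 2) ltac:(lra) ltac:(simpl; lra))].
  intros t [Ht Htr]. simpl in Htr.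
  rewrite mu_eq by (lra || (apply inside_rp; lra)).
  pose proof (PSeries_derive_le (rw / 2) t ltac:(lra) ltac:(lra) (inside_radius_h t Htr)).
  pose proof (PSeries_derive_pos (rw / 2) ltac:(lra) Hhalf).
  pose proof (PSeries_nonneg h h_nonneg t ltac:(lra) (inside_radius_h t Htr)).
  pose proof (PSeries_lt_1 t ltac:(lra) Htr). pose proof (shift_deriv_lt_1 t ltac:(lra) Htr).
  assert (HFH : c <= shift_deriv h t - PSeries h t) by (unfold shift_deriv, c; nra).
  assert (Hpsi : 1 - psi w t = (1 - shift_deriv h t) / (1 - PSeries h t))
    by (pose proof (psi_minus_one t ltac:(lra) Htr); unfold Rdiv in *; lra).
  assert (Hq : 0 <= (1 - shift_deriv h t) / (1 - PSeries h t))
    by (apply Rdiv_le_0_compat; lra).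
  rewrite Hpsi. split; split; try lra.
  - unfold Rdiv. rewrite (Rmult_comm (/ c)). apply Rmult_le_compat_l; [lra|].
    apply Rinv_le_contravar; lra.
  - replace (1 - shift_deriv h t)
      with ((1 - shift_deriv h t) / (1 - PSeries h t) * (1 - PSeries h t)) at 1
      by (field; lra).
    nra.
Qed.

Lemma limits_eq_one_no_root nu m : tends_left (psi w) (Fin rw) nu ->
  tends_left (mu (shift_coef h)) (Fin rw) m -> (nu = Fin 1 <-> m = Fin 1).
Proof.
  intros Hnu Hm. destruct one_minus_psi_mu_comparable as [K [HK Hnear]].
  split; intros ->.
  - apply (tends_left_unique (mu (shift_coef h)) (Fin rw)); [simpl; lra|exact Hm|].
    apply (tends_left_one_squeeze (psi w) _ _ 1); [lra|exact Hnu|].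
    eapply near_left_impl; [|exact Hnear]. intros t Ht; cbv beta in *; tauto.
  - apply (tends_left_unique (psi w) (Fin rw)); [simpl; lra|exact Hnu|].
    apply (tends_left_one_squeeze (mu (shift_coef h)) _ _ K); [exact HK|exact Hm|].
    eapply near_left_impl; [|exact Hnear]. intros t Ht; cbv beta in *; tauto.
Qed.

Lemma types_and_thresholds_agree_no_root : types_and_thresholds_agree w (shift_coef h).
Proof.
  destruct psi_limit as [nu [Hnu [Hnu0 [_ Hnu_le]]]].
  destruct mu_limit as [m [Hm [Hm0 [_ Hm_le]]]].
  pose proof rp_no_root as Erp. fold rp in Erp. rewrite Erp in Hm, Hm_le.
  assert (Hnu1 : ER_le nu (Fin 1)) by (apply Hnu_le; intros; apply Rlt_le, psi_lt_1; auto).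
  assert (Hm1 : ER_le m (Fin 1)) by (apply Hm_le; intros; apply Rlt_le, mu_lt_1; auto).
  assert (Hp : is_radius (shift_coef h) (Fin rw))
    by (rewrite <- Erp; apply is_radius_shift_coef).
  apply (types_and_thresholds_agree_intro w (shift_coef h) (Fin rw) (Fin rw) nu m (Fin rw));
    auto using is_radius_w.
  - rewrite !ER_ge_iff_eq by assumption. exact (limits_eq_one_no_root nu m Hnu Hm).
  - apply (tau_spec_no_root w (Fin rw) nu is_radius_w rw_pos Hnu Hnu1).
    intros t Ht Htr. pose proof (psi_lt_1 t ltac:(lra) Htr). lra.
  - apply (t0_spec_no_root (shift_coef h) (Fin rw) m Hp rw_pos Hm Hm0 Hm1).
    intros t Ht Htr. pose proof (mu_lt_1 t Ht Htr). lra.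
Qed.

End NoRoot.

End PositiveRadius.

Lemma types_and_thresholds_agree_radius_pos : Rbar_lt 0 (CV_radius h) ->
  types_and_thresholds_agree w (shift_coef h).
Proof.
  intros Hh. destruct CV_radius_inv_one_minus_finite as [rw Hrw].
  pose proof (CV_radius_inv_one_minus_pos Hh) as Hrw_pos. rewrite Hrw in Hrw_pos.
  destruct (classic (exists z, 0 < z < rw /\ shift_deriv h z = 1)) as [[z [Hz HFz]]|Hnone].
  - exact (types_and_thresholds_agree_root rw Hrw Hrw_pos z Hz HFz).
  - apply (types_and_thresholds_agree_no_root rw Hrw Hrw_pos).
    intros z Hz HFz. apply Hnone. eauto.
Qed.

End Classification.

Lemma types_and_thresholds_agree_radius_0 h w : h 0%nat = 0 -> (forall k, 0 <= h k) ->
  is_inv_one_minus h w -> Rbar_le (CV_radius h) 0 ->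
  types_and_thresholds_agree w (shift_coef h).
Proof.
  intros h0 h_nonneg hw Hh.
  assert (Eh : CV_radius h = Finite 0) by (apply Rbar_le_antisym; auto using CV_radius_ge_0).
  assert (Ew : CV_radius w = Finite 0).
  { apply Rbar_le_antisym; [|apply CV_radius_ge_0]. rewrite <- Eh.
    now apply CV_radius_inv_one_minus_le. }
  pose proof (is_radius_CV_radius w) as Hw. rewrite Ew in Hw.
  pose proof (is_radius_shift_coef h) as Hp. rewrite Eh in Hp.
  split.
  - intros T. now rewrite (weight_type_radius_0 w T Hw), (offspring_type_radius_0 _ T Hp).
  - exists (Fin 0). pose proof (tau_spec_radius_0 w Hw). pose proof (t0_spec_radius_0 _ Hp).
    tauto.
Qed.

Theorem mainTheorem7 (h w : nat -> R)
  (h0 : h 0%nat = 0)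
  (hnn : forall k, 0 <= h k)
  (hnz : exists k, h k <> 0)
  (hw : is_inv_one_minus h w) :
  (forall T : seqtype, weight_type w T <-> offspring_type (shift_coef h) T) /\
  (exists x : ER, tau_spec w x /\ t0_spec (shift_coef h) x /\
     (forall y, tau_spec w y -> y = x) /\
     (forall y, t0_spec (shift_coef h) y -> y = x)).
Proof.
  change (types_and_thresholds_agree w (shift_coef h)).
  destruct hnz as [k0 Hk0].
  assert (Hk0_pos : 0 < h k0) by (pose proof (hnn k0); lra).
  assert (Hk0_ge1 : (1 <= k0)%nat) by (destruct k0; [contradiction|lia]).
  destruct (Rbar_le_lt_dec (CV_radius h) 0) as [Hzero|Hpos].
  - now apply types_and_thresholds_agree_radius_0.
  - now apply (types_and_thresholds_agree_radius_pos h w k0).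
Qed.
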